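(* Let $s\ge2$, let $n_1,\dots,n_s$ be positive integers with $n=\sum_{i\in[s]}n_i$, let $k$ be a positive integer, and let $r_1,\dots,r_s$ be integers with $2\le r_1\le r_2\le\dots\le r_s$, $(r_i+1)\mid n_i$ for all $i\in[s]$, and $$\frac{n_s}{r_s+1}=\left\lceil\frac{k-\sum_{i\in[s-1]}r_in_i/(r_i+1)}{r_s}\right\rceil.$$ If $q>n$ is a prime power, then there exists (explicitly, as a subcode of a Reed–Solomon code obtained by splitting a parity row) an $[n,k,d]_q$ linear code which is $((n_1,r_1),\dots,(n_s,r_s))$-local and whose minimum distance equals $$d=n-k+2-\sum_{i\in[s-1]}\frac{n_i}{r_i+1}-\left\lceil\frac{k-\sum_{i\in[s-1]}r_in_i/(r_i+1)}{r_s}\right\rceil,$$ i.e. it attains the Singleton-like bound for codes with multiple localities.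
   Context: For a partition $\mathcal{T}_1,\dots,\mathcal{T}_s$ of $[n]=\{1,\dots,n\}$ with $|\mathcal{T}_i|=n_i$, a $q$-ary $[n,k,d]$ linear code is $((n_1,r_1),\dots,(n_s,r_s))$-local if for every $i\in[s]$, each code symbol indexed by an element of $\mathcal{T}_i$ is a linear combination of at most $r_i$ other code symbols indexed by elements of $\mathcal{T}_i$. *)

From HB Require Import structures.
From mathcomp Require Import all_boot all_order all_algebra all_field.
Set Implicit Arguments. Unset Strict Implicit. Unset Printing Implicit Defensive.
Import Order.TTheory GRing.Theory Num.Theory.
Local Open Scope ring_scope.

(* Codes of length n over F are subspaces of row vectors 'rV[F]_n; the code
   symbol at coordinate j of a codeword c is c 0 j. *)

Definition wt (F : fieldType) (n : nat) (v : 'rV[F]_n) : nat :=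
  #|[set j : 'I_n | v 0 j != 0]|.

Definition min_dist (F : fieldType) (n : nat) (C : {vspace 'rV[F]_n}) (d : nat) : Prop :=
  (exists2 c, c \in C & (c != 0) /\ wt c = d) /\
  (forall c, c \in C -> c != 0 -> (d <= wt c)%N).

Definition is_partition (n s : nat) (T : nat -> {set 'I_n}) (n_ : nat -> nat) : Prop :=
  [/\ (forall i, (i < s)%N -> #|T i| = n_ i),
      (forall i j, (i < j < s)%N -> [disjoint T i & T j]) &
      (forall x : 'I_n, exists2 i, (i < s)%N & x \in T i)].

Definition is_local (F : fieldType) (n s : nat) (T : nat -> {set 'I_n})
    (r_ : nat -> nat) (C : {vspace 'rV[F]_n}) : Prop :=
  forall i, (i < s)%N -> forall j, j \in T i ->
    exists R : {set 'I_n}, exists a : 'I_n -> F,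
      [/\ R \subset T i :\ j, (#|R| <= r_ i)%N &
          forall c, c \in C -> c 0 j = \sum_(l in R) a l * c 0 l].

Definition ceil_term (s k : nat) (n_ r_ : nat -> nat) : int :=
  Num.ceil (((k%:Z - \sum_(i < s.-1) (r_ i * (n_ i %/ (r_ i).+1))%:Z)%:~R : rat)
            / (r_ s.-1)%:R).

From HB Require Import structures.
From mathcomp Require Import all_boot all_order all_algebra all_field.
From mathcomp Require Import zify.
Set Implicit Arguments. Unset Strict Implicit. Unset Printing Implicit Defensive.
Import Order.TTheory GRing.Theory Num.Theory.
Local Open Scope ring_scope.

(* Split every T_i into n_i/(r_i+1) blocks of r_i+1 coordinates, choose distinct
   evaluation points a_j in F, and let t := sum_i r_i n_i/(r_i+1) - k.  The code
   consists of the words whose coordinates sum to zero on every block and whose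
   moments sum_j c_j a_j^e vanish for 1 <= e <= t: a Reed-Solomon-like code whose
   all-ones parity row has been split along the blocks.  Each symbol is minus the
   sum of the other (at most r_i) symbols of its block, which gives locality.
   Summing the block checks also kills the moment e = 0, so a nonzero codeword
   supported on at most t+1 points would be annihilated by the polynomial
   prod (X - a_j) over all but one of them: the minimum weight is at least t+2.
   There are at most n - k checks, so the dimension is at least k.  The ceiling
   hypothesis says exactly that 0 <= t < r_s, so t+2 coordinates of a block of T_s
   carry a codeword of weight t+2, and any k-dimensional subcode through it has
   minimum distance t + 2 = n - k + 2 - sum_i n_i/(r_i+1). *)

Lemma dimv_add_line (F : fieldType) (vT : vectType F) (U : {vspace vT}) v :
  v \notin U -> \dim (U + <[v]>) = (\dim U).+1.
Proof.
move=> vU; have v0 : v != 0 by apply: contraNneq vU => ->; rewrite mem0v.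
have dim_v : \dim <[v]> = 1%N by rewrite dim_vline v0.
apply/eqP; rewrite eqn_leq -[X in (_ <= X)%N]addn1 -dim_v (dimv_add_leqif U _).1.
rewrite /= ltn_neqAle dimvS ?addvSl // andbT (dimv_leqif_sup (addvSl U _)).2.
by apply: contra vU => /subvP; apply; rewrite (subvP (addvSr U _)) ?memv_line.
Qed.

Lemma exists_subv_dim (F : fieldType) (vT : vectType F) (V : {vspace vT}) w m :
  w \in V -> w != 0 -> (0 < m <= \dim V)%N ->
  exists U : {vspace vT}, [/\ (U <= V)%VS, w \in U & \dim U = m].
Proof.
move=> wV w0; elim: m => [|[|m] IHm] // /andP [_ m_le].
  by exists <[w]>%VS; rewrite -memvE wV memv_line dim_vline w0.
have [U [UV wU dimU]] := IHm (ltnW m_le).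
have [v vV vU] : exists2 v, v \in V & v \notin U.
  by apply/subvPn; apply: contraTN m_le => VU; rewrite -leqNgt -dimU dimvS.
exists (U + <[v]>)%VS; split; first by rewrite subv_add UV -memvE.
  exact: subvP (addvSl U _) _ wU.
by rewrite dimv_add_line // dimU.
Qed.

Section ParityCode.
Variables (F : fieldType) (N : nat).

Definition check_matrix (ws : seq 'rV[F]_N) : 'M[F]_(size ws, N) :=
  \matrix_(i < size ws) nth 0 ws i.

Definition parity_code (ws : seq 'rV[F]_N) : {vspace 'rV[F]_N} :=
  lker (linfun (mulmxr (check_matrix ws)^T)).

Lemma parity_codeP (ws : seq 'rV[F]_N) (c : 'rV[F]_N) :
  reflect (forall w, w \in ws -> \sum_j c 0 j * w 0 j = 0) (c \in parity_code ws).
Proof.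
rewrite memv_ker lfunE /=; apply: (iffP eqP) => [cH0 w /(nthP 0) [i i_lt <-] | cH0].
  move/rowP/(_ (Ordinal i_lt)): cH0; rewrite !mxE => cH0; rewrite -[RHS]cH0.
  by apply: eq_bigr => j _; rewrite !mxE.
apply/rowP => i; rewrite !mxE -[RHS](cH0 (nth 0 ws i)) ?mem_nth //.
by apply: eq_bigr => j _; rewrite !mxE.
Qed.

Lemma dim_parity_code (ws : seq 'rV[F]_N) : (N - size ws <= \dim (parity_code ws))%N.
Proof.
rewrite /parity_code; set f := linfun _; have := limg_ker_dim f fullv.
rewrite capfv dimvf /dim /= mul1n.
have := dimvS (subvf (f @: fullv)); rewrite dimvf /dim /= mul1n.
move: (\dim (limg f)) (\dim (lker f)) => a b; lia.
Qed.

End ParityCode.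

Lemma wt_vanishing_moments (F : fieldType) n (al : 'I_n -> F) (c : 'rV[F]_n) t :
  injective al -> (forall e, (e <= t)%N -> \sum_j c 0 j * al j ^+ e = 0) ->
  c != 0 -> (t.+2 <= wt c)%N.
Proof.
move=> al_inj moment0 c0; rewrite leqNgt; apply/negP => wt_c.
set S := [set j | c 0 j != 0].
have [j0 j0S] : exists j0, j0 \in S.
  apply/set0Pn; apply: contraNN c0 => /eqP S0; apply/eqP/rowP => j; rewrite mxE.
  by move: (in_set0 j); rewrite -S0 inE => /negbFE/eqP.
(* p kills every point of the support of c but j0, and has degree at most t. *)
pose p := \prod_(j <- enum (S :\ j0)) ('X - (al j)%:P).
have size_p : (size p <= t.+1)%N.
  by move: wt_c; rewrite size_prod_XsubC -cardE /wt -/S (cardsD1 j0 S) j0S.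
have : \sum_j c 0 j * p.[al j] = 0.
  under eq_bigr => j _ do rewrite horner_coef mulr_sumr.
  rewrite exchange_big big1 // => e _ /=.
  under eq_bigr => j _ do rewrite mulrCA.
  by rewrite -mulr_sumr moment0 ?mulr0 // -ltnS (leq_trans (ltn_ord e)).
rewrite (bigD1 j0) //= big1 ?addr0 => [|j j_j0]; last first.
  have [cj0 | cj_n0] := eqVneq (c 0 j) 0; first by rewrite cj0 mul0r.
  rewrite /p horner_prod (big_rem j) ?mem_enum ?inE ?j_j0 ?cj_n0 //=.
  by rewrite hornerXsubC subrr mul0r mulr0.
move/eqP; apply/negP; rewrite mulf_neq0 //; first by rewrite inE in j0S.
rewrite horner_prod prodf_seq_neq0.
apply/allP => j; rewrite mem_enum !inE => /andP [j_j0 _].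
by rewrite hornerXsubC subr_eq0 (inj_eq al_inj) eq_sym.
Qed.

Definition moment_row (F : fieldType) n (al : 'I_n -> F) e : 'rV[F]_n :=
  \row_j al j ^+ e.

Lemma exists_supported_vanishing_moments (F : fieldType) n (al : 'I_n -> F) t
    (S : {set 'I_n}) :
  (t.+2 <= #|S|)%N ->
  exists2 c : 'rV[F]_n, c != 0 &
    (forall j, j \notin S -> c 0 j = 0) /\
    (forall e, (e <= t)%N -> \sum_j c 0 j * al j ^+ e = 0).
Proof.
move=> S_large.
set ws := [seq moment_row al e | e <- iota 0 t.+1] ++
          [seq delta_mx 0 j | j <- enum (~: S)].
have size_ws : size ws = (t.+1 + (n - #|S|))%N.
  by rewrite size_cat !size_map size_iota -cardE [#|~: S|]cardsCs setCK card_ord.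
have : (0 < \dim (parity_code ws))%N.
  apply: leq_trans (dim_parity_code ws); rewrite size_ws.
  have := max_card S; rewrite card_ord; move: S_large; move: #|S| => m; lia.
rewrite lt0n dimv_eq0 -vpick0; set c := vpick _ => c0.
have /parity_codeP c_ws := memv_pick (parity_code ws); exists c => //; split.
  move=> j jS; rewrite -[RHS](c_ws (delta_mx 0 j)); last first.
    by rewrite mem_cat map_f ?orbT // mem_enum inE.
  rewrite (bigD1 j) //= big1 => [|l lj]; first by rewrite mxE !eqxx mulr1 addr0.
  by rewrite mxE (negbTE lj) andbF mulr0.
move=> e e_le; rewrite -[RHS](c_ws (moment_row al e)); last first.
  by rewrite mem_cat map_f // mem_iota.
by apply: eq_bigr => j _; rewrite mxE.
Qed.

Section BlockMomentCode.
Variables (F : fieldType) (n t : nat) (P : {set {set 'I_n}}) (al : 'I_n -> F).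

Definition indicator_row (A : {set 'I_n}) : 'rV[F]_n := \row_j (j \in A)%:R.

Definition block_moment_code : {vspace 'rV[F]_n} :=
  parity_code ([seq indicator_row A | A <- enum P] ++
               [seq moment_row al e | e <- iota 1 t]).

Lemma sum_indicator_row (c : 'rV[F]_n) A :
  \sum_j c 0 j * indicator_row A 0 j = \sum_(j in A) c 0 j.
Proof.
rewrite [RHS]big_mkcond; apply: eq_bigr => j _.
by rewrite mxE; case: (j \in A); rewrite ?mulr1 ?mulr0.
Qed.

Lemma block_moment_codeP (c : 'rV[F]_n) :
  reflect ((forall A, A \in P -> \sum_(j in A) c 0 j = 0) /\
           (forall e, (0 < e <= t)%N -> \sum_j c 0 j * al j ^+ e = 0))
          (c \in block_moment_code).
Proof.
apply: (iffP (parity_codeP _ _)) => [c_ws | [c_blocks c_moments] w].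
  split=> [A AP | e e_in].
    by rewrite -sum_indicator_row c_ws // mem_cat map_f ?mem_enum.
  rewrite -[RHS](c_ws (moment_row al e)); first by apply: eq_bigr => j _; rewrite mxE.
  by rewrite mem_cat map_f ?orbT // mem_iota; move: e_in; lia.
rewrite mem_cat => /orP [/mapP [A] | /mapP [e]].
  by rewrite mem_enum => AP ->; rewrite sum_indicator_row c_blocks.
rewrite mem_iota => e_in ->; rewrite -[RHS](c_moments e); last by move: e_in; lia.
by apply: eq_bigr => j _; rewrite mxE.
Qed.

Lemma dim_block_moment_code : (n - #|P| - t <= \dim block_moment_code)%N.
Proof.
apply: leq_trans (dim_parity_code _).
by rewrite size_cat !size_map size_iota -cardE subnDA.
Qed.

Lemma block_moment_code_repair (c : 'rV[F]_n) A j :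
  c \in block_moment_code -> A \in P -> j \in A ->
  c 0 j = \sum_(l in A :\ j) -1 * c 0 l.
Proof.
case/block_moment_codeP => c_blocks _ AP jA.
move/eqP: (c_blocks A AP); rewrite (big_setD1 j) //= addr_eq0 => /eqP ->.
by rewrite -sumrN; apply: eq_bigr => l _; rewrite mulN1r.
Qed.


Hypotheses (coverP : cover P = [set: 'I_n]) (trivP : trivIset P).
Hypothesis al_inj : injective al.

Lemma block_moment_code_moments (c : 'rV[F]_n) e :
  c \in block_moment_code -> (e <= t)%N -> \sum_j c 0 j * al j ^+ e = 0.
Proof.
case/block_moment_codeP => c_blocks c_moments; case: e => [_ | e e_le].
  under eq_bigr do rewrite expr0 mulr1.
  have -> : \sum_j c 0 j = \sum_(j in cover P) c 0 j.
    by apply: eq_bigl => j; rewrite coverP inE.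
  rewrite big_trivIset // big1 // => A AP; exact: c_blocks.
exact: c_moments.
Qed.

Lemma block_moment_code_wt (c : 'rV[F]_n) :
  c \in block_moment_code -> c != 0 -> (t.+2 <= wt c)%N.
Proof. by move=> cC; apply: wt_vanishing_moments al_inj _ => e; apply: block_moment_code_moments. Qed.

Lemma block_moment_code_witness A :
  A \in P -> (t.+2 <= #|A|)%N ->
  exists2 c, c \in block_moment_code & c != 0 /\ wt c = t.+2.
Proof.
move=> AP /card_geqP [s [s_uniq s_size sA]]; set S := [set x in s].
have S_card : #|S| = t.+2 by rewrite cardsE (card_uniqP s_uniq).
have SA : S \subset A by apply/subsetP => x; rewrite inE; apply: sA.
have [|c c0 [c_supp c_moments]] := @exists_supported_vanishing_moments _ _ al t S.
  by rewrite S_card.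
have cC : c \in block_moment_code.
  apply/block_moment_codeP; split=> [B BP | e /andP [_ e_le]]; last exact: c_moments.
  have [-> | BA] := eqVneq B A.
    rewrite -[RHS](c_moments 0%N) // [RHS](bigID [in A]) /= [X in _ = _ + X]big1 ?addr0.
      by apply: eq_bigr => j _; rewrite expr0 mulr1.
    by move=> j jA; rewrite c_supp ?mul0r //; apply: contra jA; apply: (subsetP SA).
  have AB : [disjoint A & B] by apply: (trivIsetP trivP A B); rewrite // eq_sym.
  rewrite big1 // => j jB; apply: c_supp; apply: contraL jB => jS.
  by rewrite (disjointFr AB) // (subsetP SA).
exists c => //; split=> //; apply/eqP; rewrite eqn_leq block_moment_code_wt // andbT.
rewrite -S_card; apply: subset_leq_card; apply/subsetP => j; rewrite inE.
by apply: contraR => jS; rewrite c_supp.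
Qed.

Lemma block_moment_subcode k A :
  (0 < k <= \dim block_moment_code)%N -> A \in P -> (t.+2 <= #|A|)%N ->
  exists C : {vspace 'rV[F]_n},
    [/\ (C <= block_moment_code)%VS, \dim C = k & min_dist C t.+2].
Proof.
move=> k_in AP A_large; have [w wC [w0 wt_w]] := block_moment_code_witness AP A_large.
have [C [CC wC' dimC]] := exists_subv_dim wC w0 k_in.
exists C; split=> //; split; first by exists w.
by move=> c /(subvP CC) cC; apply: block_moment_code_wt.
Qed.

End BlockMomentCode.

Section PartitionBlocks.
Local Open Scope nat_scope.
Variables (n s : nat) (T : nat -> {set 'I_n}) (n_ r_ : nat -> nat).
Hypothesis T_part : is_partition s T n_.
Hypothesis r_dvd : forall i, i < s -> (r_ i).+1 %| n_ i.

Definition block_count i := n_ i %/ (r_ i).+1.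

Definition rank_in i (j : 'I_n) := index j (enum (T i)).

Definition block i g : {set 'I_n} := [set j in T i | rank_in i j %/ (r_ i).+1 == g].

Definition blocks : {set {set 'I_n}} :=
  [set block (tag p) (tagged p) | p : {i : 'I_s & 'I_(block_count i)}].

Lemma card_blocks : #|blocks| <= \sum_(i < s) block_count i.
Proof.
apply: leq_trans (leq_imset_card _ _) _.
by rewrite card_tagged sumnE big_map big_enum; under eq_bigr do rewrite card_ord.
Qed.

Lemma mem_blocks i g : i < s -> g < block_count i -> block i g \in blocks.
Proof.
move=> i_lt g_lt; apply/imsetP.
by exists (existT (fun i : 'I_s => 'I_(block_count i)) (Ordinal i_lt) (Ordinal g_lt)).
Qed.

Lemma mem_T_unique i i' j : i < s -> i' < s -> j \in T i -> j \in T i' -> i = i'.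
Proof.
case: T_part => _ T_disj _ i_lt i'_lt jT jT'; case: (ltngtP i i') => // lt.
  by rewrite (disjointFr (T_disj i i' _) jT) ?lt in jT'.
by rewrite (disjointFr (T_disj i' i _) jT') ?lt in jT.
Qed.

Lemma rank_in_lt i j : i < s -> j \in T i -> rank_in i j < n_ i.
Proof.
by case: T_part => T_card _ _ i_lt jT; rewrite -(T_card i i_lt) cardE index_mem mem_enum.
Qed.

Lemma rank_in_inj i : {in T i &, injective (rank_in i)}.
Proof. by move=> j j' jT j'T; apply: (index_inj j); rewrite mem_enum. Qed.

Lemma mem_block_rank i j :
  i < s -> j \in T i -> block i (rank_in i j %/ (r_ i).+1) \in blocks.
Proof.
move=> i_lt jT; apply: mem_blocks => //.
by rewrite ltn_divLR // /block_count divnK ?r_dvd ?rank_in_lt.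
Qed.

Lemma cover_blocks : cover blocks = [set: 'I_n].
Proof.
apply/setP => j; rewrite inE; case: T_part => _ _ T_cover.
have [i i_lt jT] := T_cover j; apply/bigcupP.
by exists (block i (rank_in i j %/ (r_ i).+1)); rewrite ?mem_block_rank // inE jT /=.
Qed.

Lemma trivIset_blocks : trivIset blocks.
Proof.
apply/trivIsetP => _ _ /imsetP [[i g] _ ->] /imsetP [[i' g'] _ ->] /=.
apply: contraR; rewrite -setI_eq0 => /set0Pn [j /setIP [/setIdP [jT /eqP <-]]].
case/setIdP=> jT' /eqP <-.
by rewrite (mem_T_unique (ltn_ord i) (ltn_ord i') jT jT').
Qed.

Lemma card_block i g : #|block i g| <= (r_ i).+1.
Proof.
pose f j := inord (rank_in i j %% (r_ i).+1) : 'I_(r_ i).+1.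
rewrite -[X in _ <= X]card_ord; apply: (@leq_card_in _ _ f).
move=> j j' /setIdP [jT /eqP jg] /setIdP [j'T /eqP j'g] /(congr1 val).
rewrite /f /= !inordK ?ltn_mod // => rank_mod; apply: (rank_in_inj jT j'T).
by rewrite (divn_eq (rank_in i j) (r_ i).+1) (divn_eq (rank_in i j') (r_ i).+1) jg j'g rank_mod.
Qed.

Lemma mem_block0 i : i < s -> 0 < n_ i -> block i 0 \in blocks.
Proof. by move=> i_lt n_pos; rewrite mem_blocks // divn_gt0 // dvdn_leq ?r_dvd. Qed.

Lemma card_block0 i : i < s -> 0 < n_ i -> (r_ i).+1 <= #|block i 0|.
Proof.
case: T_part => T_card _ _ i_lt n_pos.
have r_le : (r_ i).+1 <= size (enum (T i)) by rewrite -cardE T_card // dvdn_leq ?r_dvd.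
have <- : size (take (r_ i).+1 (enum (T i))) = (r_ i).+1 by rewrite size_takel.
rewrite -(card_uniqP (take_uniq _ (enum_uniq _))) -cardsE; apply: subset_leq_card.
apply/subsetP => j; rewrite !inE => j_take; rewrite -mem_enum (mem_take j_take) /=.
by rewrite divn_small // index_ltn.
Qed.

Lemma is_local_subv_block_moment_code (F : fieldType) t (al : 'I_n -> F)
    (C : {vspace 'rV[F]_n}) :
  (C <= block_moment_code t blocks al)%VS -> is_local s T r_ C.
Proof.
move=> CC i i_lt j jT; set A := block i (rank_in i j %/ (r_ i).+1).
have AP : A \in blocks by apply: mem_block_rank.
have jA : j \in A by rewrite inE jT /=.
exists (A :\ j), (fun _ => (-1)%R); split.
- by apply: setSD; apply/subsetP => l; rewrite inE => /andP [].
- by have := card_block i (rank_in i j %/ (r_ i).+1); rewrite -/A (cardsD1 j A) jA.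
- by move=> c /(subvP CC) cC; apply: block_moment_code_repair cC AP jA.
Qed.

End PartitionBlocks.

Lemma Posz_sum (I : finType) (f : I -> nat) : (\sum_i f i)%N%:Z = \sum_i (f i)%:Z.
Proof. exact: (big_morph Posz PoszD). Qed.

Lemma ceil_term_bounds z k (n_ r_ : nat -> nat) :
  (0 < r_ z)%N -> (block_count n_ r_ z)%:Z = ceil_term z.+1 k n_ r_ ->
  (k <= \sum_(i < z.+1) r_ i * block_count n_ r_ i < k + r_ z)%N.
Proof.
move=> r_pos; rewrite /ceil_term /= big_ord_recr /= -Posz_sum.
move: (\sum_(i < z) _)%N (block_count n_ r_ z) (r_ z) r_pos => A m r r_pos.
move/esym/eqP; rewrite ceil_eq ltr_pdivlMr ?ler_pdivrMr ?ltr0n //.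
rewrite -[r%:R]/((r%:Z)%:~R : rat) -!intrM ltr_int ler_int => /andP [lo hi].
nia.
Qed.

Lemma exists_injective_ord (T : finType) n :
  (n <= #|T|)%N -> exists al : 'I_n -> T, injective al.
Proof.
move=> n_le; exists (fun j => enum_val (widen_ord n_le j)).
by move=> j j' /enum_val_inj [] /val_inj.
Qed.

Lemma sum_block_count_split s (n_ r_ : nat -> nat) :
  (forall i, (i < s)%N -> ((r_ i).+1 %| n_ i)%N) ->
  (\sum_(i < s) n_ i = \sum_(i < s) block_count n_ r_ i +
                       \sum_(i < s) r_ i * block_count n_ r_ i)%N.
Proof.
move=> r_dvd; rewrite -big_split; apply: eq_bigr => i _ /=.
by rewrite /block_count -{1}(divnK (r_dvd i (ltn_ord i))) mulnS mulnC.
Qed.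

Theorem theorem3 (F : finFieldType) (s k n : nat) (n_ r_ : nat -> nat) :
  (2 <= s)%N ->
  (forall i, (i < s)%N -> (0 < n_ i)%N) ->
  n = (\sum_(i < s) n_ i)%N ->
  (0 < k)%N ->
  (2 <= r_ 0)%N ->
  (forall i j, (i <= j < s)%N -> (r_ i <= r_ j)%N) ->
  (forall i, (i < s)%N -> (r_ i).+1 %| n_ i)%N ->
  (n_ s.-1 %/ (r_ s.-1).+1)%:Z = ceil_term s k n_ r_ ->
  (n < #|F|)%N ->
  forall T : nat -> {set 'I_n}, is_partition s T n_ ->
  exists C : {vspace 'rV[F]_n}, exists d : nat,
    [/\ \dim C = k, min_dist C d, is_local s T r_ C &
        d%:Z = n%:Z - k%:Z + 2 - (\sum_(i < s.-1) (n_ i %/ (r_ i).+1)%:Z)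
               - ceil_term s k n_ r_].
Proof.
case: s => [|z] // _ n_pos n_sum k_pos r0_ge2 r_mono r_dvd ceil_eq q_gt T T_part /=.
have r_pos : (0 < r_ z)%N := leq_trans (ltnW r0_ge2) (r_mono 0%N z (ltnSn z)).
have /andP [k_le R_lt] := ceil_term_bounds r_pos ceil_eq.
set R := (\sum_(i < z.+1) r_ i * block_count n_ r_ i)%N in k_le R_lt.
set t := (R - k)%N.
have [al al_inj] := exists_injective_ord (ltnW q_gt).
have n_split := sum_block_count_split r_dvd; rewrite -n_sum -/R in n_split.
have k_dim : (0 < k <= \dim (block_moment_code t (blocks z.+1 T n_ r_) al))%N.
  rewrite k_pos; apply: leq_trans (dim_block_moment_code _ _ _) => /=.
  have := card_blocks z.+1 T n_ r_; move: n_split; rewrite /t.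
  set b := #|_|; set M := (\sum_(i < z.+1) _)%N; lia.
have t_block : (t.+2 <= #|block T r_ z 0|)%N.
  apply: leq_trans (card_block0 T_part r_dvd _ _) => //; last exact: n_pos.
  by rewrite /t ltnS; move: k_le R_lt; lia.
have block0P := mem_block0 T r_dvd (ltnSn z) (n_pos z (ltnSn z)).
have [C [CC dimC minC]] := block_moment_subcode (cover_blocks T_part r_dvd)
  (trivIset_blocks r_ T_part) al_inj k_dim block0P t_block.
exists C, t.+2; split=> //; first by apply: is_local_subv_block_moment_code CC.
rewrite -ceil_eq -Posz_sum -[z.+1.-1]/(z : nat); rewrite big_ord_recr /= in n_split.
set M := (\sum_(i < z) _)%N in n_split *; move: n_split k_le R_lt; rewrite /t /block_count; lia.
Qed.
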